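(* Let $\mathfrak{G}$ be any graph with maximum degree $\mathfrak{d}\ge2$. Given any node $a$ of $\mathfrak{G}$ and any weight $w\in\mathbb{Z}_{>0}$, the number of connected clusters $\mathbf{W}$ with $a\in\mathbf{W}$ and $|\mathbf{W}|=w$ is at most $e\mathfrak{d}(1+e(\mathfrak{d}-1))^{w-1}$. If $\mathfrak{d}=1$, the number is at most $w$.
   Context: A cluster on a graph $\mathfrak{G}$ is a finite multiset of vertices, i.e. a finitely supported function $\mu$ from vertices to $\mathbb{Z}_{\ge0}$; its total weight is $|\mathbf{W}|=\sum_v\mu(v)$, its support is $\{v:\mu(v)\ge1\}$, and $a\in\mathbf{W}$ means $\mu(a)\ge1$. A cluster is connected if the subgraph of $\mathfrak{G}$ induced on its support is connected. *)

(* A graph is a (possibly infinite) vertex type V with a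
   symmetric irreflexive adjacency relation. *)
From Stdlib Require Export Reals List Relations.
Export ListNotations.

Definition has_degree {V : Type} (adj : V -> V -> Prop) (v : V) (k : nat) : Prop :=
  exists l : list V, NoDup l /\ (forall u, In u l <-> adj v u) /\ length l = k.

Definition max_degree {V : Type} (adj : V -> V -> Prop) (d : nat) : Prop :=
  (forall v, exists k, (k <= d)%nat /\ has_degree adj v k) /\
  (exists v, has_degree adj v d).

(* a cluster is a function mu : V -> nat; finite support and total weight w:
   its support is a finite duplicate-free list s and the sum of mu over s is w *)
Definition cluster_weight {V : Type} (mu : V -> nat) (w : nat) : Prop :=
  exists s : list V, NoDup s /\ (forall v, In v s <-> (0 < mu v)%nat) /\
    list_sum (map mu s) = w.

Definition induced_edge {V : Type} (adj : V -> V -> Prop) (mu : V -> nat) (x y : V) : Prop :=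
  adj x y /\ (0 < mu x)%nat /\ (0 < mu y)%nat.

Definition cluster_connected {V : Type} (adj : V -> V -> Prop) (mu : V -> nat) : Prop :=
  forall u v, (0 < mu u)%nat -> (0 < mu v)%nat ->
    clos_refl_trans V (induced_edge adj mu) u v.

Definition pairwise_distinct {V : Type} (L : list (V -> nat)) : Prop :=
  ForallOrdPairs (fun f g => exists v, f v <> g v) L.

From Stdlib Require Import Reals List Relations Lra Lia.
From Stdlib Require Import Classical ClassicalEpsilon FunctionalExtensionality.
Open Scope R_scope.

(* Clusters are counted by peeling off a root r: record the multiplicity of r and the set S
   of its fresh neighbours lying in the support, then delete r.  What remains is a cluster of
   smaller weight rooted at the other roots and at S, in which r and the fresh neighbours
   outside S are forbidden; this map is injective.  Every root but the first has a forbidden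
   neighbour (its parent), hence at most d - 1 fresh neighbours, so a profile G with
   sum_(w' < w) sum_j C(c, j) G (k + j) w' <= G (k + 1) w for c <= d - 1 bounds the number of
   clusters of weight w with k roots.  For d >= 2 the profile g^k b^w with b = 1 + e (d - 1) and
   g = 1/(d - 1) (g = 2/3 when d = 2) works and yields e d b^(w - 1); for d = 1 a polynomial
   profile yields w. *)

Definition sumR (l : list R) : R := fold_right Rplus 0 l.

Lemma sumR_app (l1 l2 : list R) : sumR (l1 ++ l2) = sumR l1 + sumR l2.
Proof. induction l1 as [|x l1 IH]; simpl; [lra | rewrite IH; lra]. Qed.

Lemma sumR_map_ext {X} (f g : X -> R) (l : list X) :
  (forall x, In x l -> f x = g x) -> sumR (map f l) = sumR (map g l).
Proof. intros H; f_equal; apply map_ext_in; exact H. Qed.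

Lemma sumR_map_scal {X} (f : X -> R) (c : R) (l : list X) :
  sumR (map (fun x => c * f x) l) = c * sumR (map f l).
Proof. induction l as [|x l IH]; simpl; [ring | rewrite IH; ring]. Qed.

Lemma sumR_map_const_le {X} (f : X -> R) (M : R) (l : list X) :
  (forall x, In x l -> f x <= M) -> sumR (map f l) <= INR (length l) * M.
Proof.
  induction l as [|x l IH]; intros H; [simpl; lra|].
  change (f x + sumR (map f l) <= INR (S (length l)) * M).
  rewrite S_INR. pose proof (H x (or_introl eq_refl)).
  pose proof (IH (fun y Hy => H y (or_intror Hy))). lra.
Qed.

Lemma geometric_sum (b : R) (w : nat) :
  (b - 1) * sumR (map (pow b) (seq 0 w)) = b ^ w - 1.
Proof.
  induction w as [|w IH]; [simpl; ring|].
  rewrite seq_S, map_app, sumR_app, Rmult_plus_distr_l, IH. simpl. ring.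
Qed.

Definition classic_bool (P : Prop) : bool :=
  if excluded_middle_informative P then true else false.

Lemma classic_bool_true (P : Prop) : classic_bool P = true <-> P.
Proof.
  unfold classic_bool; destruct (excluded_middle_informative P); split; auto; discriminate.
Qed.

Definition at_most {X : Type} (P : X -> Prop) (c : R) : Prop :=
  forall L, NoDup L -> (forall x, In x L -> P x) -> INR (length L) <= c.

Lemma at_most_sub {X} (P Q : X -> Prop) (c : R) :
  (forall x, P x -> Q x) -> at_most Q c -> at_most P c.
Proof. intros HPQ B L HL HP. apply B; auto. Qed.

Lemma at_most_le {X} (P : X -> Prop) (c c' : R) : c <= c' -> at_most P c -> at_most P c'.
Proof. intros H B L HL HP. specialize (B L HL HP). lra. Qed.

Lemma at_most_empty {X} (P : X -> Prop) : (forall x, ~ P x) -> at_most P 0.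
Proof. intros H [|x L] _ HP; simpl; [lra|]. destruct (H x (HP x (or_introl eq_refl))). Qed.

Lemma at_most_subsingleton {X} (P : X -> Prop) (x0 : X) :
  (forall x, P x -> x = x0) -> at_most P 1.
Proof.
  intros H [|x [|y L]] HL HP; [simpl; lra | simpl; lra |].
  inversion HL as [|? ? Hx _]; subst. exfalso. apply Hx.
  rewrite (H x), (H y); [left; reflexivity | apply HP; simpl; auto ..].
Qed.

Lemma at_most_cover {X Y} (P : X -> Prop) (Q : Y -> X -> Prop) (I : list Y) (c : Y -> R) :
  (forall x, P x -> exists i, In i I /\ Q i x) ->
  (forall i, In i I -> at_most (fun x => P x /\ Q i x) (c i)) ->
  at_most P (sumR (map c I)).
Proof.
  revert P. induction I as [|i I IH]; intros P Hcov Hb L HL HP.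
  - destruct L as [|x L]; simpl; [lra|].
    destruct (Hcov x (HP x (or_introl eq_refl))) as [j [[] _]].
  - simpl. rewrite <- (filter_length (fun x => classic_bool (Q i x)) L), plus_INR.
    apply Rplus_le_compat.
    + apply (Hb i (or_introl eq_refl)); [apply NoDup_filter; exact HL|].
      intros x Hx. apply filter_In in Hx as [Hx Hq]. split; auto. apply classic_bool_true; auto.
    + apply (IH (fun x => P x /\ ~ Q i x)).
      * intros x [Px Nq]. destruct (Hcov x Px) as [j [[<-|Hj] Hq]]; [contradiction | eauto].
      * intros j Hj. eapply at_most_sub; [|apply (Hb j (or_intror Hj))]. simpl. tauto.
      * apply NoDup_filter; exact HL.
      * intros x Hx. apply filter_In in Hx as [Hx Hq]. split; auto.
        intros Hq'. apply classic_bool_true in Hq'. rewrite Hq' in Hq. discriminate.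
Qed.

Lemma at_most_inj {X Y} (P : X -> Prop) (Q : Y -> Prop) (f : X -> Y) (c : R) :
  (forall x, P x -> Q (f x)) -> (forall x y, P x -> P y -> f x = f y -> x = y) ->
  at_most Q c -> at_most P c.
Proof.
  intros HQ Hinj B L HL HP. rewrite <- (length_map f L). apply B.
  - clear B HQ. induction HL as [|x L Hx HL IH]; simpl; constructor.
    + rewrite in_map_iff. intros [y [Hxy Hy]].
      apply Hx. replace x with y; [exact Hy|]. apply Hinj; auto; apply HP; simpl; auto.
    + apply IH. intros; apply HP; simpl; auto.
  - intros y Hy. apply in_map_iff in Hy as [x [<- Hx]]. auto.
Qed.

Fixpoint subsets {A : Type} (l : list A) : list (list A) :=
  match l with
  | [] => [[]]
  | x :: l' => subsets l' ++ map (cons x) (subsets l')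
  end.

Lemma filter_In_subsets {A} (f : A -> bool) (l : list A) : In (filter f l) (subsets l).
Proof.
  induction l as [|x l IH]; simpl; auto. apply in_or_app.
  destruct (f x); [right; apply in_map | left]; exact IH.
Qed.

Lemma subsets_NoDup_incl {A} (l S : list A) :
  In S (subsets l) -> NoDup l -> NoDup S /\ incl S l.
Proof.
  revert S; induction l as [|x l IH]; simpl; intros S HS Hl.
  - destruct HS as [<-|[]]. split; [constructor | intros z []].
  - inversion Hl as [|? ? Hx Hl']; subst. apply in_app_or in HS as [HS|HS].
    + destruct (IH S HS Hl') as [HSn HSi]. split; [exact HSn | apply incl_tl, HSi].
    + apply in_map_iff in HS as [S' [<- HS']].
      destruct (IH S' HS' Hl') as [HSn HSi]. split.
      * constructor; auto.
      * apply incl_cons; [left; reflexivity | apply incl_tl, HSi].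
Qed.

(* [binomial_sum c f] is the sum of [C(c,j) * f j] over [j <= c], built by Pascal's rule. *)
Fixpoint binomial_sum (c : nat) (f : nat -> R) : R :=
  match c with
  | O => f O
  | S c => binomial_sum c f + binomial_sum c (fun j => f (S j))
  end.

Lemma binomial_sum_ext (c : nat) (f g : nat -> R) :
  (forall j, f j = g j) -> binomial_sum c f = binomial_sum c g.
Proof.
  revert f g; induction c as [|c IH]; intros f g H; simpl; auto.
  rewrite (IH f g), (IH (fun j => f (S j)) (fun j => g (S j))); auto.
Qed.

Lemma sumR_subsets_size {A} (l : list A) (f : nat -> R) :
  sumR (map (fun S => f (length S)) (subsets l)) = binomial_sum (length l) f.
Proof.
  revert f; induction l as [|x l IH]; intros f; simpl; [lra|].
  rewrite map_app, sumR_app, IH, map_map. simpl. rewrite (IH (fun j => f (S j))). reflexivity.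
Qed.

Lemma binomial_sum_pow (c : nat) (g A : R) :
  binomial_sum c (fun j => A * g ^ j) = A * (1 + g) ^ c.
Proof.
  revert A; induction c as [|c IH]; intros A; simpl; [ring|].
  rewrite IH, (binomial_sum_ext c _ (fun j => (A * g) * g ^ j)), IH; [ring|].
  intros j; simpl; ring.
Qed.

Definition peel_bound (G : nat -> nat -> R) (k c w : nat) : R :=
  sumR (map (fun w' => binomial_sum c (fun j => G (k + j)%nat w')) (seq 0 w)).

Definition admissible_profile (d : nat) (G : nat -> nat -> R) : Prop :=
  1 <= G 0%nat 0%nat /\ (forall w, 0 <= G 0%nat w) /\
  (forall k c w, (c <= d - 1)%nat -> peel_bound G k c w <= G (S k) w).

Lemma sumR_subsets_peel {A} (G : nat -> nat -> R) (k w : nat) (C : list A) :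
  sumR (map (fun w' => sumR (map (fun S => G (k + length S)%nat w') (subsets C))) (seq 0 w))
  = peel_bound G k (length C) w.
Proof.
  apply sumR_map_ext. intros w' _. apply (sumR_subsets_size C (fun j => G (k + j)%nat w')).
Qed.

Definition zero_at {V : Type} (mu : V -> nat) (r : V) : V -> nat :=
  fun v => if excluded_middle_informative (v = r) then 0%nat else mu v.

Lemma zero_at_eq {V} (mu : V -> nat) (r : V) : zero_at mu r r = 0%nat.
Proof. unfold zero_at; destruct (excluded_middle_informative (r = r)); congruence. Qed.

Lemma zero_at_neq {V} (mu : V -> nat) (r v : V) : v <> r -> zero_at mu r v = mu v.
Proof. unfold zero_at; destruct (excluded_middle_informative (v = r)); congruence. Qed.

Lemma zero_at_inj {V} (mu1 mu2 : V -> nat) (r : V) :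
  mu1 r = mu2 r -> zero_at mu1 r = zero_at mu2 r -> mu1 = mu2.
Proof.
  intros Hr E. extensionality v. destruct (classic (v = r)) as [->|Hv]; [exact Hr|].
  pose proof (equal_f E v) as Ev. rewrite !zero_at_neq in Ev; auto.
Qed.

Lemma list_sum_zero_at {V} (mu : V -> nat) (r : V) (s : list V) :
  NoDup s -> In r s -> (list_sum (map (zero_at mu r) s) + mu r = list_sum (map mu s))%nat.
Proof.
  induction 1 as [|x s Hx Hs IH]; simpl; [tauto|]. intros [<-|Hr].
  - rewrite zero_at_eq, (map_ext_in (zero_at mu x) mu s); [lia|].
    intros v Hv. apply zero_at_neq. intros ->. contradiction.
  - rewrite zero_at_neq by (intros ->; contradiction). specialize (IH Hr). lia.
Qed.

Lemma le_list_sum {V} (mu : V -> nat) (x : V) (s : list V) :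
  In x s -> (mu x <= list_sum (map mu s))%nat.
Proof.
  induction s as [|y s IH]; simpl; [tauto|]. intros [<-|H]; [lia | specialize (IH H); lia].
Qed.

Section RootedClusters.

Variables (V : Type) (adj : V -> V -> Prop).
Hypothesis adj_sym : forall x y, adj x y -> adj y x.

Definition has_weight (mu : V -> nat) (w : nat) : Prop :=
  exists s, NoDup s /\ (forall v, (0 < mu v)%nat -> In v s) /\ list_sum (map mu s) = w.

Definition rooted_cluster (rs : list V) (F : V -> Prop) (w : nat) (mu : V -> nat) : Prop :=
  (forall v, F v -> mu v = 0%nat) /\ (forall r, In r rs -> (1 <= mu r)%nat) /\ has_weight mu w /\
  (forall v, (0 < mu v)%nat -> exists r, In r rs /\ clos_refl_trans V (induced_edge adj mu) v r).

Definition peeled_forbidden (F : V -> Prop) (r : V) (C S : list V) (v : V) : Prop :=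
  F v \/ v = r \/ (In v C /\ ~ In v S).

Lemma rooted_cluster_nil (F : V -> Prop) (w : nat) (mu : V -> nat) :
  rooted_cluster [] F w mu -> mu = (fun _ => 0%nat) /\ w = 0%nat.
Proof.
  intros [_ [_ [[s [_ [_ <-]]] Hc]]].
  assert (Hz : forall v, mu v = 0%nat).
  { intros v. destruct (Nat.eq_dec (mu v) 0) as [E|E]; [exact E|].
    destruct (Hc v ltac:(lia)) as [? [[] _]]. }
  split; [extensionality v; apply Hz|].
  induction s as [|x s IH]; simpl; [reflexivity | rewrite Hz, IH; reflexivity].
Qed.

Lemma rooted_cluster_root_bounds (rs : list V) (F : V -> Prop) (w : nat) (mu : V -> nat) (r : V) :
  rooted_cluster rs F w mu -> In r rs -> (1 <= mu r <= w)%nat.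
Proof.
  intros [_ [Hr [[s [_ [Hs <-]]] _]]] Hin. specialize (Hr r Hin).
  split; [exact Hr|]. apply le_list_sum, Hs. lia.
Qed.

Section Peel.

Variables (r : V) (rs : list V) (F : V -> Prop) (C : list V).
Hypothesis roots_NoDup : NoDup (r :: rs).
Hypothesis C_fresh : forall v, In v C <-> adj r v /\ ~ In v (r :: rs) /\ ~ F v.

(* Walking along a path towards a root, either a root of [rs] is reached before [r],
   or the vertex visited just before [r] is a fresh neighbour of [r] in the support. *)
Lemma induced_path_avoiding_root (mu : V -> nat) (x y : V) :
  (forall v, F v -> mu v = 0%nat) ->
  clos_refl_trans_1n V (induced_edge adj mu) x y -> In y (r :: rs) ->
  (0 < mu x)%nat -> x <> r ->
  exists r', In r' (rs ++ filter (fun v => (0 <? mu v)%nat) C) /\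
    clos_refl_trans V (induced_edge adj (zero_at mu r)) x r'.
Proof.
  intros HF Hxy. induction Hxy as [x|x z y Hxz Hzy IH]; intros Hy Hx Hxr.
  - exists x. split; [|apply rt_refl]. apply in_or_app; left.
    destruct Hy; [congruence | assumption].
  - destruct (classic (In x rs)) as [Hrs|Hrs].
    { exists x; split; [apply in_or_app; left; exact Hrs | apply rt_refl]. }
    destruct (classic (z = r)) as [->|Hz].
    + exists x. split; [|apply rt_refl]. apply in_or_app; right.
      apply filter_In. split; [|apply Nat.ltb_lt; exact Hx].
      apply C_fresh. split; [apply adj_sym, Hxz|]. split.
      * intros [H|H]; [apply Hxr; symmetry; exact H | contradiction].
      * intros HFx. rewrite (HF x HFx) in Hx. lia.
    + destruct Hxz as [Hadj [Hmx Hmz]].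
      destruct (IH Hy Hmz Hz) as [r' [Hr' Hp]].
      exists r'. split; [exact Hr'|]. eapply rt_trans; [apply rt_step | exact Hp].
      split; [exact Hadj|]. rewrite !zero_at_neq; auto.
Qed.

Lemma rooted_cluster_zero_at_root (w w' : nat) (mu : V -> nat) :
  rooted_cluster (r :: rs) F w mu -> (mu r + w')%nat = w ->
  let S := filter (fun v => (0 <? mu v)%nat) C in
  rooted_cluster (rs ++ S) (peeled_forbidden F r C S) w' (zero_at mu r).
Proof.
  intros Hmu Hw S. pose proof Hmu as [HF [Hr [[s [Hs [Hss Hsum]]] Hc]]].
  inversion roots_NoDup as [|? ? HrR Hrs]; subst.
  split; [|split; [|split]].
  - intros v Hv. destruct (classic (v = r)) as [->|Hne]; [apply zero_at_eq|].
    rewrite zero_at_neq by exact Hne. destruct Hv as [Hv|[Hv|[HvC HvS]]]; auto; [contradiction|].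
    destruct (Nat.eq_dec (mu v) 0) as [E|E]; [exact E|]. exfalso; apply HvS.
    apply filter_In; split; [exact HvC | apply Nat.ltb_lt; lia].
  - intros v Hv. apply in_app_or in Hv as [Hv|Hv].
    + rewrite zero_at_neq by (intros ->; contradiction). apply Hr; right; exact Hv.
    + apply filter_In in Hv as [HvC Hp]. apply Nat.ltb_lt in Hp.
      rewrite zero_at_neq; [lia|]. intros ->.
      apply C_fresh in HvC as [_ [Hn _]]. apply Hn; left; reflexivity.
  - exists s. split; [exact Hs|]. split.
    + intros v Hv. apply Hss. destruct (classic (v = r)) as [->|Hne].
      * rewrite zero_at_eq in Hv; lia.
      * rewrite zero_at_neq in Hv; auto.
    + assert (Hrs' : In r s) by (apply Hss; apply Hr; left; reflexivity).
      pose proof (list_sum_zero_at mu r s Hs Hrs'). lia.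
  - intros v Hv. destruct (classic (v = r)) as [->|Hne]; [rewrite zero_at_eq in Hv; lia|].
    rewrite zero_at_neq in Hv by exact Hne.
    destruct (Hc v Hv) as [r0 [Hr0 Hp]].
    apply (induced_path_avoiding_root mu v r0); auto. apply clos_rt_rt1n, Hp.
Qed.

Lemma at_most_peel_root (w : nat) (B : list V -> nat -> R) :
  (forall S w', In S (subsets C) -> (w' < w)%nat ->
     at_most (rooted_cluster (rs ++ S) (peeled_forbidden F r C S) w') (B S w')) ->
  at_most (rooted_cluster (r :: rs) F w)
    (sumR (map (fun w' => sumR (map (fun S => B S w') (subsets C))) (seq 0 w))).
Proof.
  intros HB.
  apply (at_most_cover _ (fun w' mu => (mu r + w')%nat = w)).
  { intros mu Hmu.
    destruct (rooted_cluster_root_bounds _ _ _ _ r Hmu) as [H1 H2]; [left; reflexivity|].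
    exists (w - mu r)%nat. split; [apply in_seq; lia | lia]. }
  intros w' Hw'. apply in_seq in Hw'.
  apply (at_most_cover _ (fun S mu => filter (fun v => (0 <? mu v)%nat) C = S)).
  { intros mu _. eexists; split; [apply filter_In_subsets | reflexivity]. }
  intros S HS.
  apply (at_most_inj _ (rooted_cluster (rs ++ S) (peeled_forbidden F r C S) w')
                     (fun mu => zero_at mu r)).
  - intros mu [[Hmu Hw] <-]. apply (rooted_cluster_zero_at_root w); auto.
  - intros mu1 mu2 [[_ H1] _] [[_ H2] _]. apply zero_at_inj. lia.
  - apply HB; [exact HS | lia].
Qed.

Lemma peeled_roots_admissible (S : list V) :
  NoDup C -> In S (subsets C) ->
  (forall z, In z rs -> exists u, F u /\ adj z u) ->
  NoDup (rs ++ S) /\ (forall z, In z (rs ++ S) -> exists u, peeled_forbidden F r C S u /\ adj z u).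
Proof.
  intros HC HS Hforb. destruct (subsets_NoDup_incl C S HS HC) as [HSnd HSC].
  inversion roots_NoDup as [|? ? HrR Hrs]; subst. split.
  - apply NoDup_app; auto. intros z Hz HzS.
    destruct (proj1 (C_fresh z) (HSC z HzS)) as [_ [Hfresh _]]. apply Hfresh; right; exact Hz.
  - intros z Hz. apply in_app_or in Hz as [Hz|Hz].
    + destruct (Hforb z Hz) as [u [Fu Hu]]. exists u. split; [left|]; assumption.
    + exists r. split; [right; left; reflexivity|]. apply adj_sym, C_fresh, HSC, Hz.
Qed.

End Peel.

Variable d : nat.
Hypothesis degree_le : forall v, exists k, (k <= d)%nat /\ has_degree adj v k.

Lemma fresh_neighbours (r : V) (rs : list V) (F : V -> Prop) :
  exists C, NoDup C /\ (forall v, In v C <-> adj r v /\ ~ In v (r :: rs) /\ ~ F v) /\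
    (length C <= d)%nat /\ ((exists u, F u /\ adj r u) -> (S (length C) <= d)%nat).
Proof.
  destruct (degree_le r) as [k [Hk [N [HN [HNr <-]]]]].
  set (C := filter (fun v => classic_bool (~ (In v (r :: rs) \/ F v))) N).
  assert (HC : forall v, In v C <-> adj r v /\ ~ In v (r :: rs) /\ ~ F v).
  { intros v. unfold C. rewrite filter_In, classic_bool_true, HNr. tauto. }
  exists C. split; [apply NoDup_filter, HN|]. split; [exact HC|]. split.
  - etransitivity; [|exact Hk]. apply NoDup_incl_length; [apply NoDup_filter, HN|].
    intros v Hv. apply HNr, HC, Hv.
  - intros [u [Fu Hu]]. etransitivity; [|exact Hk].
    change (S (length C)) with (length (u :: C)). apply NoDup_incl_length.
    + constructor; [intros Hin; apply HC in Hin; tauto | apply NoDup_filter, HN].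
    + intros v [<-|Hv]; apply HNr; [exact Hu | apply HC, Hv].
Qed.

Variable G : nat -> nat -> R.
Hypothesis G_admissible : admissible_profile d G.

Lemma at_most_rooted_profile (w : nat) :
  forall rs F, NoDup rs -> (forall r, In r rs -> exists u, F u /\ adj r u) ->
  at_most (rooted_cluster rs F w) (G (length rs) w).
Proof.
  destruct G_admissible as [HG00 [HG0 HGstep]].
  induction w as [w IH] using Wf_nat.lt_wf_ind. intros [|r rs] F Hrs Hforb.
  - destruct w as [|w].
    + apply (at_most_le _ 1); [exact HG00|].
      apply (at_most_subsingleton _ (fun _ => 0%nat)). intros mu Hmu.
      apply (rooted_cluster_nil F 0 mu Hmu).
    + apply (at_most_le _ 0); [apply HG0|]. apply at_most_empty. intros mu Hmu.
      destruct (rooted_cluster_nil F (S w) mu Hmu) as [_ E]. discriminate.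
  - destruct (fresh_neighbours r rs F) as [C [HCnd [HC [_ HlC]]]].
    specialize (HlC (Hforb r (or_introl eq_refl))).
    eapply at_most_le;
      [|apply (at_most_peel_root r rs F C Hrs HC w (fun S w' => G (length rs + length S)%nat w'))].
    + rewrite sumR_subsets_peel. apply HGstep. lia.
    + intros S w' HS Hw'. rewrite <- length_app.
      destruct (peeled_roots_admissible r rs F C Hrs HC S HCnd HS
                  (fun z Hz => Hforb z (or_intror Hz))) as [Hnd Hforb'].
      apply IH; assumption.
Qed.

Lemma at_most_clusters_at (a : V) (w : nat) (T : R) :
  (forall c, (c <= d)%nat -> peel_bound G 0 c w <= T) ->
  at_most (rooted_cluster [a] (fun _ => False) w) T.
Proof.
  intros HT. destruct (fresh_neighbours a [] (fun _ => False)) as [C [HCnd [HC [HlC _]]]].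
  assert (Ha : NoDup [a]) by (constructor; [intros [] | constructor]).
  eapply at_most_le;
    [|apply (at_most_peel_root a [] (fun _ => False) C Ha HC w
              (fun S w' => G (0 + length S)%nat w'))].
  - rewrite sumR_subsets_peel. apply HT, HlC.
  - intros S w' HS Hw'.
    destruct (peeled_roots_admissible a [] (fun _ => False) C Ha HC S HCnd HS
                (fun z Hz => match Hz with end)) as [Hnd Hforb].
    apply (at_most_rooted_profile w' S); assumption.
Qed.

End RootedClusters.

Lemma peel_bound_geometric (g b : R) (k c w : nat) :
  peel_bound (fun k w => g ^ k * b ^ w) k c w = g ^ k * (1 + g) ^ c * sumR (map (pow b) (seq 0 w)).
Proof.
  unfold peel_bound. rewrite <- sumR_map_scal. apply sumR_map_ext. intros w' _.
  rewrite (binomial_sum_ext c _ (fun j => (g ^ k * b ^ w') * g ^ j)), binomial_sum_pow; [ring|].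
  intros j. rewrite pow_add. ring.
Qed.

Lemma geometric_profile_admissible (d : nat) (g b : R) :
  0 < g -> 1 < b -> (1 + g) ^ (d - 1) <= g * (b - 1) ->
  admissible_profile d (fun k w => g ^ k * b ^ w).
Proof.
  intros Hg Hb Hgb. split; [simpl; lra|]. split; [intros w; simpl; pose proof (pow_lt b w); lra|].
  intros k c w Hc. rewrite peel_bound_geometric.
  pose proof (geometric_sum b w) as Hsum. pose proof (pow_lt b w).
  pose proof (pow_lt g k). pose proof (pow_lt (1 + g) c).
  assert (Hpow : (1 + g) ^ c <= (1 + g) ^ (d - 1)) by (apply Rle_pow; lra || lia).
  apply Rmult_le_reg_l with (b - 1); [lra|]. simpl.
  replace ((b - 1) * (g ^ k * (1 + g) ^ c * sumR (map (pow b) (seq 0 w))))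
    with (g ^ k * (1 + g) ^ c * ((b - 1) * sumR (map (pow b) (seq 0 w)))) by ring.
  rewrite Hsum.
  apply Rle_trans with (g ^ k * (1 + g) ^ (d - 1) * b ^ w).
  - apply Rle_trans with (g ^ k * (1 + g) ^ c * b ^ w); [nra|].
    apply Rmult_le_compat_r; [lra|]. apply Rmult_le_compat_l; lra.
  - replace ((b - 1) * (g * g ^ k * b ^ w)) with (g ^ k * (g * (b - 1)) * b ^ w) by ring.
    apply Rmult_le_compat_r; [lra|]. apply Rmult_le_compat_l; lra.
Qed.

Lemma geometric_peel_bound_le (d : nat) (g b E : R) (c w : nat) :
  0 < g -> 1 < b -> (1 + g) ^ d * b <= E * (b - 1) -> (c <= d)%nat -> (1 <= w)%nat ->
  peel_bound (fun k w => g ^ k * b ^ w) 0 c w <= E * b ^ (w - 1).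
Proof.
  intros Hg Hb HE Hc Hw. rewrite peel_bound_geometric. simpl pow at 1.
  pose proof (geometric_sum b w) as Hsum. pose proof (pow_lt b (w - 1)).
  pose proof (pow_lt (1 + g) c).
  assert (Hpow : (1 + g) ^ c <= (1 + g) ^ d) by (apply Rle_pow; lra || lia).
  assert (Hbw : b ^ w = b * b ^ (w - 1)) by (replace w with (S (w - 1)) at 1 by lia; reflexivity).
  apply Rmult_le_reg_l with (b - 1); [lra|].
  replace ((b - 1) * (1 * (1 + g) ^ c * sumR (map (pow b) (seq 0 w))))
    with ((1 + g) ^ c * ((b - 1) * sumR (map (pow b) (seq 0 w)))) by ring.
  rewrite Hsum, Hbw.
  apply Rle_trans with ((1 + g) ^ d * b * b ^ (w - 1)).
  - apply Rle_trans with ((1 + g) ^ c * b * b ^ (w - 1)); [nra|].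
    apply Rmult_le_compat_r; [lra|]. apply Rmult_le_compat_r; lra.
  - replace ((b - 1) * (E * b ^ (w - 1))) with (E * (b - 1) * b ^ (w - 1)) by ring.
    apply Rmult_le_compat_r; lra.
Qed.

Definition polynomial_profile (k w : nat) : R :=
  match k, w with
  | O, O => 1
  | S k, S _ => INR w ^ k
  | _, _ => 0
  end.

Lemma polynomial_profile_admissible : admissible_profile 1 polynomial_profile.
Proof.
  split; [simpl; lra|]. split; [intros [|w]; simpl; lra|].
  intros k c w Hc. replace c with 0%nat by lia. unfold peel_bound. simpl binomial_sum.
  rewrite Nat.add_0_r. destruct w as [|w]; [simpl; lra|].
  destruct k as [|k].
  - rewrite <- cons_seq.
    change (sumR (map _ (0%nat :: seq 1 w)))
      with (1 + sumR (map (fun w' => polynomial_profile 0 w') (seq 1 w))).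
    assert (sumR (map (fun w' => polynomial_profile 0 w') (seq 1 w)) <= INR (length (seq 1 w)) * 0).
    { apply sumR_map_const_le. intros [|x] Hx; [apply in_seq in Hx; lia | simpl; lra]. }
    change (polynomial_profile 1 (S w)) with 1. lra.
  - eapply Rle_trans; [apply (sumR_map_const_le _ (INR (S w) ^ k))|].
    + intros [|x] Hx.
      * change (polynomial_profile (S k) 0) with 0. apply pow_le, pos_INR.
      * change (polynomial_profile (S k) (S x)) with (INR (S x) ^ k). apply in_seq in Hx.
        apply pow_incr. split; [apply pos_INR | apply le_INR; lia].
    + rewrite length_seq. simpl. lra.
Qed.

Lemma polynomial_peel_bound_le (c w : nat) :
  (c <= 1)%nat -> peel_bound polynomial_profile 0 c w <= INR w.
Proof.
  intros Hc. unfold peel_bound. eapply Rle_trans; [apply (sumR_map_const_le _ 1)|].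
  - intros [|x] _; destruct c as [|[|c]]; simpl; lra || lia.
  - rewrite length_seq. lra.
Qed.

Lemma exp_pow_INR (x : R) (n : nat) : exp x ^ n = exp (INR n * x).
Proof.
  induction n as [|n IH]; simpl pow; [rewrite Rmult_0_l, exp_0; reflexivity|].
  rewrite IH, S_INR, <- exp_plus. f_equal; ring.
Qed.

Lemma exp_1_ge_5_2 : 5 / 2 <= exp 1.
Proof.
  replace 1 with (INR 8 * (1 / 8)) by (simpl; lra). rewrite <- exp_pow_INR.
  apply Rle_trans with ((1 + 1 / 8) ^ 8); [simpl; lra|].
  apply pow_incr. split; [lra | apply exp_ineq1_le].
Qed.

Lemma peeling_ratio_degree_2 :
  let b := 1 + exp 1 * (INR 2 - 1) in
  exists g, 0 < g /\ (1 + g) ^ (2 - 1) <= g * (b - 1) /\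
    (1 + g) ^ 2 * b <= exp 1 * INR 2 * (b - 1).
Proof.
  intros b. unfold b. pose proof exp_1_ge_5_2 as He.
  replace (INR 2) with 2 by (simpl; lra).
  exists (2 / 3). simpl. split; [lra|]. split; [lra|].
  pose proof (Rmult_le_pos (exp 1 - 5 / 2) (exp 1) ltac:(lra) ltac:(lra)). lra.
Qed.

Lemma peeling_ratio_degree_ge_3 (d : nat) : (3 <= d)%nat ->
  let b := 1 + exp 1 * (INR d - 1) in
  exists g, 0 < g /\ (1 + g) ^ (d - 1) <= g * (b - 1) /\
    (1 + g) ^ d * b <= exp 1 * INR d * (b - 1).
Proof.
  intros Hd b. pose proof exp_1_ge_5_2 as He.
  set (t := INR d - 1).
  assert (Ht : 2 <= t) by (unfold t; apply le_INR in Hd; simpl in Hd; lra).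
  assert (Hgt : / t * t = 1) by (field; lra).
  assert (Hg : 0 < / t) by (apply Rinv_0_lt_compat; lra).
  assert (Hpow : (1 + / t) ^ (d - 1) <= exp 1).
  { apply Rle_trans with (exp (/ t) ^ (d - 1)).
    - apply pow_incr. split; [lra | apply exp_ineq1_le].
    - rewrite exp_pow_INR, minus_INR by lia. simpl (INR 1). fold t. rewrite Rmult_comm, Hgt. lra. }
  exists (/ t). unfold b. fold t. split; [exact Hg|].
  replace (/ t * (1 + exp 1 * t - 1)) with (exp 1 * (/ t * t)) by ring. rewrite Hgt.
  split; [lra|].
  replace ((1 + / t) ^ d) with ((1 + / t) * (1 + / t) ^ (d - 1))
    by (replace d with (S (d - 1)) at 2 by lia; reflexivity).
  replace (INR d) with (t + 1) by (unfold t; ring).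
  assert (Hpos : 0 < (1 + / t) ^ (d - 1)) by (apply pow_lt; lra).
  apply Rle_trans with (exp 1 * ((1 + / t) * (1 + exp 1 * t))).
  - replace (exp 1 * ((1 + / t) * (1 + exp 1 * t)))
      with ((1 + / t) * exp 1 * (1 + exp 1 * t)) by ring.
    apply Rmult_le_compat_r; [nra|]. apply Rmult_le_compat_l; lra.
  - replace ((1 + / t) * (1 + exp 1 * t)) with (1 + exp 1 * t + / t + exp 1 * (/ t * t)) by ring.
    rewrite Hgt. replace (exp 1 * (t + 1) * (1 + exp 1 * t - 1))
      with (exp 1 * (exp 1 * t * t + exp 1 * t)) by ring.
    apply Rmult_le_compat_l; [lra|].
    assert (/ t <= 1 / 2) by (apply Rmult_le_reg_r with t; [lra|]; rewrite Hgt; lra).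
    assert (exp 1 * 4 <= exp 1 * (t * t)) by (apply Rmult_le_compat_l; nra).
    lra.
Qed.

Lemma peeling_ratio_exists (d : nat) : (2 <= d)%nat ->
  let b := 1 + exp 1 * (INR d - 1) in
  exists g, 0 < g /\ (1 + g) ^ (d - 1) <= g * (b - 1) /\
    (1 + g) ^ d * b <= exp 1 * INR d * (b - 1).
Proof.
  intros Hd. destruct (Nat.eq_dec d 2) as [->|Hd3].
  - exact peeling_ratio_degree_2.
  - apply peeling_ratio_degree_ge_3. lia.
Qed.

Lemma pairwise_distinct_NoDup {X : Type} (L : list (X -> nat)) : pairwise_distinct L -> NoDup L.
Proof.
  induction 1 as [|f L Hf _ IH]; constructor; [|exact IH].
  intros Hin. rewrite Forall_forall in Hf. destruct (Hf f Hin) as [v Hv]. apply Hv; reflexivity.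
Qed.

Lemma connected_cluster_rooted {V : Type} (adj : V -> V -> Prop) (a : V) (w : nat) (mu : V -> nat) :
  cluster_connected adj mu -> (1 <= mu a)%nat -> cluster_weight mu w ->
  rooted_cluster V adj [a] (fun _ => False) w mu.
Proof.
  intros Hc Ha [s [Hs [Hss Hsum]]]. split; [intros _ []|]. split; [intros r [<-|[]]; exact Ha|].
  split; [exists s; split; [exact Hs|]; split; [intros v; apply Hss | exact Hsum]|].
  intros v Hv. exists a. split; [left; reflexivity | apply Hc; lia].
Qed.

Theorem proposition3p6 :
  forall (V : Type) (adj : V -> V -> Prop) (d : nat),
    (forall x y, adj x y -> adj y x) ->
    (forall x, ~ adj x x) ->
    max_degree adj d ->
    forall (a : V) (w : nat), (0 < w)%nat ->
    forall L : list (V -> nat),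
      pairwise_distinct L ->
      (forall mu, In mu L ->
         cluster_connected adj mu /\ (1 <= mu a)%nat /\ cluster_weight mu w) ->
      ((2 <= d)%nat ->
         INR (length L) <= exp 1 * INR d * (1 + exp 1 * (INR d - 1)) ^ (w - 1)) /\
      (d = 1%nat -> (length L <= w)%nat).
Proof.
  intros V adj d adj_sym _ [degree_le _] a w Hw L HL HLmu.
  assert (Hcount : forall T,
    at_most (rooted_cluster V adj [a] (fun _ => False) w) T -> INR (length L) <= T).
  { intros T HT. apply HT; [apply pairwise_distinct_NoDup, HL|].
    intros mu Hmu. destruct (HLmu mu Hmu) as [Hc [Ha Hwt]].
    apply connected_cluster_rooted; assumption. }
  split.
  - intros Hd. set (b := 1 + exp 1 * (INR d - 1)).
    assert (Hb : 1 < b).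
    { pose proof exp_1_ge_5_2. apply le_INR in Hd. simpl in Hd. unfold b. nra. }
    destruct (peeling_ratio_exists d Hd) as [g [Hg [Hstep Htop]]].
    apply Hcount, (at_most_clusters_at V adj adj_sym d degree_le (fun k w => g ^ k * b ^ w)).
    + apply geometric_profile_admissible; assumption.
    + intros c Hc. apply (geometric_peel_bound_le d); assumption || lia.
  - intros ->. apply INR_le, Hcount.
    apply (at_most_clusters_at V adj adj_sym 1 degree_le polynomial_profile).
    + exact polynomial_profile_admissible.
    + intros c Hc. apply polynomial_peel_bound_le, Hc.
Qed.
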